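(* For every positive integer $n$ and every real $x$, \begin{align*} \sum_{k=1}^n\frac{((4x-27)k^2+(2x+27)k-2x-6)x^k}{(2k-1)\binom{3k}k}&=-2x+2(n+1)\frac{x^{n+1}}{\binom{3n}n},\\ \sum_{k=1}^n\frac{((4x-27)k^2+(27-2x)k-6)x^k}{k(2k-1)\binom{3k}k}&=-2x+\frac{2x^{n+1}}{\binom{3n}n},\\ \sum_{k=1}^n\frac{(2(x-16)k^2+(x+32)k-x-6)x^k}{(2k-1)\binom{4k}{2k}}&=-x+(n+1)\frac{x^{n+1}}{\binom{4n}{2n}},\\ \sum_{k=1}^n\frac{(2(x-16)k^2+(32-x)k-6)x^k}{k(2k-1)\binom{4k}{2k}}&=-x+\frac{x^{n+1}}{\binom{4n}{2n}},\\ \sum_{k=1}^n\frac{((4x-27)k^2+(6x+27)k+2x-6)x^k}{\binom{3k}k}&=-2x+\frac{2(n+1)(2n+1)x^{n+1}}{\binom{3n}n},\\ \sum_{k=1}^n\frac{(2(x-16)k^2+(3x+32)k+x-6)x^k}{\binom{4k}{2k}}&=-x+\frac{(n+1)(2n+1)x^{n+1}}{\binom{4n}{2n}}. \end{align*} *)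

From mathcomp Require Import all_boot all_order all_algebra.
Set Implicit Arguments. Unset Strict Implicit. Unset Printing Implicit Defensive.

(* Each identity telescopes: if G n denotes its right-hand side, then G 0 = 0
   and the k-th summand equals G k - G (k - 1).  Once the binomial coefficient
   at k + 1 is expressed through the one at k,
     C(3k+3, k+1) = C(3k, k) 3(3k+1)(3k+2) / (2(k+1)(2k+1)),
     C(4k+4, 2k+2) = C(4k, 2k) 2(4k+1)(4k+3) / ((k+1)(2k+1)),
   this is an identity between rational functions of k and x.  In particular
   the identities also hold for n = 0. *)
From mathcomp Require Import all_boot all_order all_algebra.
From mathcomp Require Import ring lra zify.
Import Order.TTheory GRing.Theory Num.Theory.
Local Open Scope ring_scope.

Lemma sum_telescope1 (V : zmodType) (u G : nat -> V) :
  G 0%N = 0 -> (forall k, u k.+1 = G k.+1 - G k) ->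
  forall n, \sum_(1 <= k < n.+1) u k = G n.
Proof.
move=> G0 uG n.
by rewrite big_add1 /= (telescope_sumr_eq G) ?G0 ?subr0 // => k _.
Qed.

Lemma natr_fact_neq0 (R : numDomainType) m : m`!%:R != 0 :> R.
Proof. by rewrite pnatr_eq0 -lt0n fact_gt0. Qed.

Lemma natr_bin_neq0 (R : numDomainType) m k : (k <= m)%N -> 'C(m, k)%:R != 0 :> R.
Proof. by rewrite pnatr_eq0 -lt0n bin_gt0. Qed.

Lemma natr_bin (R : numFieldType) m k : (k <= m)%N ->
  'C(m, k)%:R = m`!%:R / (k`!%:R * (m - k)`!%:R) :> R.
Proof.
move=> le_km; rewrite -(bin_fact le_km) !natrM mulfK //.
by rewrite mulf_neq0 ?natr_fact_neq0.
Qed.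

Ltac pos_neq0 := repeat (apply/andP; split); try done; apply: lt0r_neq0; lra.

Lemma natr_bin3S (R : realFieldType) n :
  'C(3 * n.+1, n.+1)%:R = 'C(3 * n, n)%:R * (3 * (3 * n%:R + 1) * (3 * n%:R + 2))
     / (2 * (n%:R + 1) * (2 * n%:R + 1)) :> R.
Proof.
have -> : (3 * n.+1 = (3 * n).+3)%N by lia.
rewrite !natr_bin; try lia.
have -> : ((3 * n).+3 - n.+1 = (2 * n).+2)%N by lia.
have -> : (3 * n - n = 2 * n)%N by lia.
have := natr_fact_neq0 R n; have := natr_fact_neq0 R (2 * n).
have n_ge0 : 0 <= n%:R :> R by [].
rewrite !factS !natrM -!natr1 natrM => ? ?.
field; pos_neq0.
Qed.

Lemma natr_bin4S (R : realFieldType) n :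
  'C(4 * n.+1, 2 * n.+1)%:R = 'C(4 * n, 2 * n)%:R * (2 * (4 * n%:R + 1) * (4 * n%:R + 3))
     / ((n%:R + 1) * (2 * n%:R + 1)) :> R.
Proof.
have -> : (4 * n.+1 = (4 * n).+4)%N by lia.
have -> : (2 * n.+1 = (2 * n).+2)%N by lia.
rewrite !natr_bin; try lia.
have -> : ((4 * n).+4 - (2 * n).+2 = (2 * n).+2)%N by lia.
have -> : (4 * n - 2 * n = 2 * n)%N by lia.
have := natr_fact_neq0 R (2 * n).
have n_ge0 : 0 <= n%:R :> R by [].
rewrite !factS !natrM -!natr1 !natrM => ?.
field; pos_neq0.
Qed.

Section TelescopingSums.

Variables (R : realFieldType) (x : R).

Lemma sum_bin3_odd n :
  \sum_(1 <= k < n.+1)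
        (((4 * x - 27) * k%:R ^+ 2 + (2 * x + 27) * k%:R - 2 * x - 6) * x ^+ k)
        / ((2 * k%:R - 1) * 'C(3 * k, k)%:R)
      = - 2 * x + 2 * n.+1%:R * x ^+ n.+1 / 'C(3 * n, n)%:R.
Proof.
move: n; apply: sum_telescope1 => [|k]; first by rewrite bin0; field.
have : 'C(3 * k, k)%:R != 0 :> R by rewrite natr_bin_neq0 // leq_pmull.
have k_ge0 : 0 <= k%:R :> R by [].
rewrite natr_bin3S -!natr1 !exprS => ?.
field; pos_neq0.
Qed.

Lemma sum_bin3_kodd n :
  \sum_(1 <= k < n.+1)
        (((4 * x - 27) * k%:R ^+ 2 + (27 - 2 * x) * k%:R - 6) * x ^+ k)
        / (k%:R * (2 * k%:R - 1) * 'C(3 * k, k)%:R)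
      = - 2 * x + 2 * x ^+ n.+1 / 'C(3 * n, n)%:R.
Proof.
move: n; apply: sum_telescope1 => [|k]; first by rewrite bin0; field.
have : 'C(3 * k, k)%:R != 0 :> R by rewrite natr_bin_neq0 // leq_pmull.
have k_ge0 : 0 <= k%:R :> R by [].
rewrite natr_bin3S -!natr1 !exprS => ?.
field; pos_neq0.
Qed.

Lemma sum_bin3 n :
  \sum_(1 <= k < n.+1)
        (((4 * x - 27) * k%:R ^+ 2 + (6 * x + 27) * k%:R + 2 * x - 6) * x ^+ k)
        / 'C(3 * k, k)%:R
      = - 2 * x + 2 * n.+1%:R * (2 * n%:R + 1) * x ^+ n.+1 / 'C(3 * n, n)%:R.
Proof.
move: n; apply: sum_telescope1 => [|k]; first by rewrite bin0; field.
have : 'C(3 * k, k)%:R != 0 :> R by rewrite natr_bin_neq0 // leq_pmull.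
have k_ge0 : 0 <= k%:R :> R by [].
rewrite natr_bin3S -!natr1 !exprS => ?.
field; pos_neq0.
Qed.

Lemma sum_bin4_odd n :
  \sum_(1 <= k < n.+1)
        ((2 * (x - 16) * k%:R ^+ 2 + (x + 32) * k%:R - x - 6) * x ^+ k)
        / ((2 * k%:R - 1) * 'C(4 * k, 2 * k)%:R)
      = - x + n.+1%:R * x ^+ n.+1 / 'C(4 * n, 2 * n)%:R.
Proof.
move: n; apply: sum_telescope1 => [|k]; first by rewrite bin0; field.
have : 'C(4 * k, 2 * k)%:R != 0 :> R by rewrite natr_bin_neq0 // leq_mul2r orbT.
have k_ge0 : 0 <= k%:R :> R by [].
rewrite natr_bin4S -!natr1 !exprS => ?.
field; pos_neq0.
Qed.

Lemma sum_bin4_kodd n :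
  \sum_(1 <= k < n.+1)
        ((2 * (x - 16) * k%:R ^+ 2 + (32 - x) * k%:R - 6) * x ^+ k)
        / (k%:R * (2 * k%:R - 1) * 'C(4 * k, 2 * k)%:R)
      = - x + x ^+ n.+1 / 'C(4 * n, 2 * n)%:R.
Proof.
move: n; apply: sum_telescope1 => [|k]; first by rewrite bin0; field.
have : 'C(4 * k, 2 * k)%:R != 0 :> R by rewrite natr_bin_neq0 // leq_mul2r orbT.
have k_ge0 : 0 <= k%:R :> R by [].
rewrite natr_bin4S -!natr1 !exprS => ?.
field; pos_neq0.
Qed.

Lemma sum_bin4 n :
  \sum_(1 <= k < n.+1)
        ((2 * (x - 16) * k%:R ^+ 2 + (3 * x + 32) * k%:R + x - 6) * x ^+ k)
        / 'C(4 * k, 2 * k)%:R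
      = - x + n.+1%:R * (2 * n%:R + 1) * x ^+ n.+1 / 'C(4 * n, 2 * n)%:R.
Proof.
move: n; apply: sum_telescope1 => [|k]; first by rewrite bin0; field.
have : 'C(4 * k, 2 * k)%:R != 0 :> R by rewrite natr_bin_neq0 // leq_mul2r orbT.
have k_ge0 : 0 <= k%:R :> R by [].
rewrite natr_bin4S -!natr1 !exprS => ?.
field; pos_neq0.
Qed.

End TelescopingSums.

Theorem lemma6p1 (R : realFieldType) (n : nat) (x : R) (hn : (0 < n)%N) :
  (\sum_(1 <= k < n.+1)
        (((4 * x - 27) * k%:R ^+ 2 + (2 * x + 27) * k%:R - 2 * x - 6) * x ^+ k)
        / ((2 * k%:R - 1) * 'C(3 * k, k)%:R)
      = - 2 * x + 2 * n.+1%:R * x ^+ n.+1 / 'C(3 * n, n)%:R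
  /\ \sum_(1 <= k < n.+1)
        (((4 * x - 27) * k%:R ^+ 2 + (27 - 2 * x) * k%:R - 6) * x ^+ k)
        / (k%:R * (2 * k%:R - 1) * 'C(3 * k, k)%:R)
      = - 2 * x + 2 * x ^+ n.+1 / 'C(3 * n, n)%:R
  /\ \sum_(1 <= k < n.+1)
        ((2 * (x - 16) * k%:R ^+ 2 + (x + 32) * k%:R - x - 6) * x ^+ k)
        / ((2 * k%:R - 1) * 'C(4 * k, 2 * k)%:R)
      = - x + n.+1%:R * x ^+ n.+1 / 'C(4 * n, 2 * n)%:R
  /\ \sum_(1 <= k < n.+1)
        ((2 * (x - 16) * k%:R ^+ 2 + (32 - x) * k%:R - 6) * x ^+ k)
        / (k%:R * (2 * k%:R - 1) * 'C(4 * k, 2 * k)%:R)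
      = - x + x ^+ n.+1 / 'C(4 * n, 2 * n)%:R
  /\ \sum_(1 <= k < n.+1)
        (((4 * x - 27) * k%:R ^+ 2 + (6 * x + 27) * k%:R + 2 * x - 6) * x ^+ k)
        / 'C(3 * k, k)%:R
      = - 2 * x + 2 * n.+1%:R * (2 * n%:R + 1) * x ^+ n.+1 / 'C(3 * n, n)%:R
  /\ \sum_(1 <= k < n.+1)
        ((2 * (x - 16) * k%:R ^+ 2 + (3 * x + 32) * k%:R + x - 6) * x ^+ k)
        / 'C(4 * k, 2 * k)%:R
      = - x + n.+1%:R * (2 * n%:R + 1) * x ^+ n.+1 / 'C(4 * n, 2 * n)%:R).
Proof.
split; first exact: sum_bin3_odd.
split; first exact: sum_bin3_kodd.
split; first exact: sum_bin4_odd.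
split; first exact: sum_bin4_kodd.
by split; [exact: sum_bin3 | exact: sum_bin4].
Qed.
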